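(* Let $(S,g,h)$ be a finite almost simple $(2,m,n)$-group with Euler characteristic $\chi=-2^as^b$ for some odd prime $s$ and positive integers $a,b$, whose socle is $T=PSL_3(q)$ with $q>2$ a prime power. Then there is a positive integer $c$ and a prime $r$ with $q-1=r^c$.
   Context: A $(2,m,n)$-group is a triple $(G,g,h)$ where $G$ is a finite group, $g\in G$ has order $m$, $h\in G$ has order $n$, $G=\langle g,h\rangle$ and $(gh)^2=1$; its Euler characteristic is $\chi=|G|(\frac1m-\frac12+\frac1n)$. $S$ almost simple with socle $T$ means $T$ is non-abelian simple and $T\leq S\leq\mathrm{Aut}(T)$. *)

From HB Require Import structures.
From mathcomp Require Import all_boot all_order all_algebra all_fingroup all_solvable all_field.
Set Implicit Arguments. Unset Strict Implicit. Unset Printing Implicit Defensive.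
Import GRing.Theory.
From mathcomp Require Import matrix.

Definition SL3 (F : finFieldType) : {set {'GL_3[F]}} :=
  [set x : {'GL_3[F]} | (\det (GLval x) == 1)%R].

Definition PSL3 (F : finFieldType) := (SL3 F / 'Z(SL3 F))%g.

(* S is almost simple with socle T: T is a non-abelian simple normal subgroup
   of S with trivial centraliser in S (equivalently T <= S <= Aut(T) via conjugation). *)
Definition almost_simple_with_socle (gT : finGroupType) (S T : {group gT}) : Prop :=
  [/\ T <| S, simple T, ~~ abelian T & 'C_S(T) = 1]%g.

(* (S,g,h) is a (2,m,n)-group with m = #[g], n = #[h] *)
Definition two_m_n_group (gT : finGroupType) (S : {group gT}) (g h : gT) : Prop :=
  [/\ g \in S, h \in S, <<[set g; h]>>%g = S & ((g * h) ^+ 2 = 1)%g].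

Definition euler_char (gT : finGroupType) (S : {group gT}) (g h : gT) : rat :=
  (#|S|%:R * ((#[g]%g%:R)^-1 - 2^-1 + (#[h]%g%:R)^-1))%R.

From HB Require Import structures.
From mathcomp Require Import all_boot all_order all_algebra all_fingroup all_solvable all_field.
From mathcomp Require Import zify ring.
Set Implicit Arguments. Unset Strict Implicit. Unset Printing Implicit Defensive.
Import GRing.Theory.

(* With m = #[g] and n = #[h], chi = -2^a s^b reads
   |S| (mn - 2m - 2n) = 2^(a+1) s^b mn, so for a prime p outside {2, s} the
   p-part of |S| divides that of m or of n: S has a cyclic Sylow p-subgroup,
   hence p-rank at most 1, and so does its subgroup T = PSL_3(q).  But
   PSL_3(q) has p-rank at least 2 when p is the characteristic (two commuting
   transvections) and when p divides q - 1 (two commuting diagonal matrices,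
   or for p = 3 a diagonal matrix and a permutation matrix commuting modulo
   scalars).  So the characteristic and every prime divisor of q - 1 lie in
   {2, s}; as the characteristic does not divide q - 1, q - 1 is a power of
   the other prime. *)

Lemma partn_dvd_orders p K N D m n :
    prime p -> coprime p K -> 0 < N -> 0 < D -> 0 < m -> 0 < n ->
    gcdn m n %| D -> N * D = K * (m * n) ->
  N`_p %| m`_p \/ N`_p %| n`_p.
Proof.
move=> p_pr pK N_gt0 D_gt0.
have K_gt0 : 0 < K by case: K pK => //; rewrite prime_coprime ?dvdn0.
wlog le_mn : m n / logn p m <= logn p n => [hyp m_gt0 n_gt0|].
  have [le_mn | /ltnW le_nm] := leqP (logn p m) (logn p n); first exact: hyp.
  rewrite gcdnC [m * n]mulnC => gcd_D eq_ND.
  by have [] := hyp n m le_nm n_gt0 m_gt0 gcd_D eq_ND; [right | left].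
move=> m_gt0 n_gt0 gcd_D eq_ND; right.
have pm_D : p ^ logn p m %| D.
  by apply: dvdn_trans gcd_D; rewrite dvdn_gcd !pfactor_dvdn ?leqnn.
have := congr1 (logn p) eq_ND.
rewrite !lognM ?muln_gt0 ?m_gt0 ?n_gt0 // (logn_coprime pK) add0n => eq_logn.
rewrite !p_part dvdn_exp2l ?prime_gt1 //.
by move: pm_D; rewrite pfactor_dvdn //; lia.
Qed.

Lemma prime_power_of_pdivisors p s n :
    prime p -> prime s -> 1 < n -> coprime p n -> (p == 2) || (p == s) ->
    (forall r, prime r -> r %| n -> (r == 2) || (r == s)) ->
  exists c r, [/\ 0 < c, prime r & n = r ^ c].
Proof.
move=> p_pr s_pr n_gt1 pn p_2s n_2s.
pose t := if p == 2 then s else 2.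
have t_pr : prime t by rewrite /t; case: ifP.
have [c nE] : {c | n = t ^ c}.
  apply/p_natP/(pnatP _ (ltnW n_gt1)) => r r_pr r_n.
  have r_neq_p : r != p by apply: contraTneq pn => <-; rewrite prime_coprime // r_n.
  move: r_neq_p (n_2s r r_pr r_n); move: p_2s; rewrite inE /t.
  case/orP=> /eqP-> /negPf ->; rewrite ?orbF ?eqxx //.
  by move=> /eqP->; case: ifP => // /eqP->.
by exists c, t; split=> //; case: c nE n_gt1 => // ->.
Qed.

Lemma euler_char_negE (gT : finGroupType) (S : {group gT}) (g h : gT) C :
    0 < C -> euler_char S g h = (- C%:R)%R ->
  let m := #[g]%g in let n := #[h]%g in
  #|S| * (m * n - 2 * (m + n)) = 2 * C * (m * n) /\ 2 * (m + n) < m * n.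
Proof.
rewrite /euler_char => C_gt0; have := order_gt0 g; have := order_gt0 h.
move: #|S| #[g]%g #[h]%g => N m n n_gt0 m_gt0 chiE /=.
have eq_N : N * (m * n) = N * (2 * (m + n)) + 2 * C * (m * n).
  apply/eqP; rewrite -(Num.Theory.eqr_nat rat) -subr_eq0; apply/eqP.
  have m0 : (m%:R != 0 :> rat)%R by rewrite Num.Theory.pnatr_eq0 -lt0n.
  have n0 : (n%:R != 0 :> rat)%R by rewrite Num.Theory.pnatr_eq0 -lt0n.
  rewrite !(natrD, natrM).
  have -> : (N%:R * (m%:R * n%:R)
             - (N%:R * (2%:R * (m%:R + n%:R)) + 2%:R * C%:R * (m%:R * n%:R))
      = - (2%:R * m%:R * n%:R) * (N%:R * (m%:R^-1 - 2^-1 + n%:R^-1) + C%:R) :> rat)%R.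
    by field; rewrite m0 n0.
  by rewrite chiE addNr mulr0.
have lt_mn : 2 * (m + n) < m * n.
  have pos : 0 < 2 * C * (m * n) by rewrite !muln_gt0 C_gt0 m_gt0 n_gt0.
  rewrite ltnNge; apply/negP => le; move: (leq_mul2l N (m * n) (2 * (m + n))).
  rewrite le orbT; lia.
by split=> //; rewrite mulnBr eq_N addKn.
Qed.

Section PRank.
Local Open Scope group_scope.
Variable gT : finGroupType.
Implicit Types (G S : {group gT}) (x y g h : gT).

Lemma p_rank_le1_elt (p : nat) G x : x \in G -> #|G|`_p %| #[x]`_p -> 'r_p(G) <= 1.
Proof.
move=> Gx dvd_Gx.
have sylX : p.-Sylow(G) <[x.`_p]>.
  rewrite pHallE cycle_subG groupX //= -orderE order_constt.
  by rewrite eqn_dvd dvd_Gx partn_dvd ?order_dvdG.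
rewrite -(p_rank_Sylow sylX); apply: leq_trans (p_rank_le_rank _ _) _.
by rewrite rank_cycle leq_b1.
Qed.

Lemma p_rank_le1_euler_char (p : nat) S g h C :
    g \in S -> h \in S -> 0 < C -> euler_char S g h = (- C%:R)%R ->
    prime p -> coprime p (2 * C) ->
  'r_p(S) <= 1.
Proof.
move=> Sg Sh C_gt0 chiE p_pr pC.
have [eq_S lt_mn] := euler_char_negE C_gt0 chiE.
have gcd_D : gcdn #[g] #[h] %| #[g] * #[h] - 2 * (#[g] + #[h]).
  apply: dvdn_sub; first by rewrite dvdn_mulr ?dvdn_gcdl.
  by rewrite dvdn_mull // dvdn_add ?dvdn_gcdl ?dvdn_gcdr.
have [] := partn_dvd_orders p_pr pC (cardG_gt0 S) _ (order_gt0 g) (order_gt0 h) gcd_D eq_S.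
- by rewrite subn_gt0.
- exact: p_rank_le1_elt.
- exact: p_rank_le1_elt.
Qed.

Lemma p_rank_ge2 (p : nat) G x y :
    prime p -> x \in G -> y \in G -> commute x y -> #[x] = p -> #[y] = p ->
    y \notin <[x]> ->
  1 < 'r_p(G).
Proof.
move=> p_pr Gx Gy cxy ox oy yNx.
have cXY : <[x]> \subset 'C(<[y]>) by rewrite cents_cycle.
have abelE : p.-abelem (<[x]> <*> <[y]>).
  apply/abelemP=> //; split; first by rewrite abelianY !cycle_abelian centsC.
  move=> z; rewrite /= (cent_joinEl cXY) => /imset2P[u v xu yv ->].
  have cuv : commute u v by apply: (centsP cXY).
  by rewrite expgMn // -{1}ox -oy !orderE !expg_cardG ?mulg1.
have ncycE : ~~ cyclic (<[x]> <*> <[y]>).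
  apply: contra yNx => cycE.
  have := eq_subG_cyclic cycE (joing_subl _ _) (joing_subr _ _).
  by rewrite -!orderE ox oy eqxx => /eqP ->; rewrite cycle_id.
apply: leq_trans (logn_le_p_rank (E := [group of <[x]> <*> <[y]>]) _).
  by rewrite ltnNge -abelem_cyclic.
by rewrite inE abelE join_subG !cycle_subG Gx Gy.
Qed.

End PRank.

Section QuotientPRank.
Local Open Scope group_scope.
Variable gT : finGroupType.
Implicit Types (G H : {group gT}) (x y : gT).

Lemma order_coset_prime (p : nat) H x :
  prime p -> x \in 'N(H) -> x ^+ p \in H -> x \notin H -> #[coset H x] = p.
Proof.
move=> p_pr Nx xpH xNH; apply/prime_nt_dvdP => //.
  by rewrite order_eq1; apply: contra xNH => /eqP; apply: coset_idr.
by rewrite order_dvdn -morphX //; apply/eqP/coset_id.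
Qed.

Lemma quotient_p_rank_ge2 (p : nat) G H x y :
    H <| G -> prime p -> x \in G -> y \in G ->
    x ^+ p \in H -> y ^+ p \in H -> [~ x, y] \in H ->
    x \notin H -> (forall k, y * (x ^+ k)^-1 \notin H) ->
  1 < 'r_p(G / H).
Proof.
move=> nsHG p_pr Gx Gy xpH ypH cxyH xNH yxNH.
have [Nx Ny] : x \in 'N(H) /\ y \in 'N(H) by rewrite !(subsetP (normal_norm nsHG)).
apply: (p_rank_ge2 p_pr (mem_quotient _ Gx) (mem_quotient _ Gy)).
- have Ncxy : [~ x, y] \in 'N(H) := subsetP (normG H) _ cxyH.
  rewrite /commute -!morphM // commgC (morphM _ (groupM Ny Nx) Ncxy).
  by rewrite [coset_morphism H [~ x, y]](coset_id cxyH) mulg1.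
- exact: order_coset_prime.
- by apply: order_coset_prime => //; have := yxNH 0; rewrite invg1 mulg1.
apply/cycleP=> -[k eq_yx]; case/negP: (yxNH k).
rewrite coset_idr ?groupM ?groupV ?groupX // morphM ?groupV ?groupX //.
rewrite morphV ?groupX // morphX //.
by change (coset H y * (coset H x ^+ k)^-1 = 1); rewrite eq_yx mulgV.
Qed.

End QuotientPRank.

Section SL3Matrices.
Variable F : finFieldType.
Local Open Scope ring_scope.

(* Entries are indexed by [nat], so that concrete entries reduce by [simpl]
   and matrix identities close by [ring]. *)
Definition mx3 (f : nat -> nat -> F) : 'M[F]_3 := \matrix_(i, j) f i j.

Lemma mx3E (f : nat -> nat -> F) (i j : 'I_3) : mx3 f i j = f i j.
Proof. by rewrite mxE. Qed.

Lemma eq_mx3 (f g : nat -> nat -> F) :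
  (forall i j, (i < 3)%N -> (j < 3)%N -> f i j = g i j) -> mx3 f = mx3 g.
Proof. by move=> eq_fg; apply/matrixP => i j; rewrite !mxE eq_fg. Qed.

Lemma mx3_neq (f g : nat -> nat -> F) (i j : 'I_3) c :
  f i j - g i j = c -> c != 0 -> mx3 f != mx3 g.
Proof. by move=> <-; apply: contra => /eqP eq_fg; rewrite -!mx3E eq_fg subrr. Qed.

Lemma mul_mx3 (f g : nat -> nat -> F) : mx3 f *m mx3 g =
  mx3 (fun i j => f i 0%N * g 0%N j + f i 1%N * g 1%N j + f i 2%N * g 2%N j).
Proof.
apply/matrixP => i j; rewrite !mxE !big_ord_recl big_ord0 !mxE /=.
by rewrite /bump /= ?(addn0, add0n) addr0 addrA.
Qed.

Lemma det_mx3 (f : nat -> nat -> F) : \det (mx3 f) =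
  f 0 0 * (f 1 1 * f 2 2 - f 1 2 * f 2 1) - f 0 1 * (f 1 0 * f 2 2 - f 1 2 * f 2 0)
  + f 0 2 * (f 1 0 * f 2 1 - f 1 1 * f 2 0).
Proof.
rewrite (expand_det_row _ 0) !big_ord_recl big_ord0 /cofactor.
rewrite !(expand_det_row _ 0) !big_ord_recl !big_ord0 /cofactor !det_mx11 !mxE /=.
by rewrite /bump /= ?(addn0, add0n); ring.
Qed.

(* Junk value [1] on singular matrices. *)
Definition GLof (M : 'M[F]_3) : {'GL_3[F]} := insubd (1%g : {'GL_3[F]}) M.

Lemma GLofE M : \det M != 0 -> GLval (GLof M) = M.
Proof. by move=> detM; rewrite /GLof val_insubd unitmxE unitfE detM. Qed.

Lemma GLof1 : GLof 1%:M = 1%g.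
Proof. by apply: val_inj; rewrite [\val _]GLofE ?det1 ?oner_neq0. Qed.

Lemma GLofM A B :
  \det A != 0 -> \det B != 0 -> (GLof A * GLof B)%g = GLof (A *m B).
Proof.
move=> detA detB; apply: val_inj.
rewrite -[\val _]/(GLval _) -[\val (GLof _)]/(GLval _) GL_MxE !GLofE //.
by rewrite det_mulmx mulf_neq0.
Qed.

Lemma GLofX A k : \det A != 0 -> (GLof A ^+ k)%g = GLof (A ^+ k).
Proof.
move=> detA; have detAk : forall i, \det (A ^+ i) != 0.
  by elim=> [|i IHi]; rewrite ?expr0 ?det1 ?oner_neq0 // exprSr -mulmxE det_mulmx mulf_neq0.
elim: k => [|k IHk]; first by rewrite expg0 expr0 GLof1.
by rewrite expgSr IHk GLofM // exprSr -mulmxE.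
Qed.

Lemma GLofV A B : \det A != 0 -> A *m B = 1%:M -> ((GLof A)^-1)%g = GLof B.
Proof.
move=> detA AB1; have detB : \det B != 0.
  apply/eqP=> detB; have := det1 F 3.
  by rewrite -AB1 det_mulmx detB mulr0 => /eqP; rewrite eq_sym oner_eq0.
by apply: mulg1_eq; rewrite GLofM // AB1 GLof1.
Qed.

Lemma SL3_group_set : group_set (SL3 F).
Proof.
apply/group_setP; split; first by rewrite inE GL_1E det1.
by move=> x y; rewrite !inE GL_MxE det_mulmx => /eqP-> /eqP->; rewrite mulr1.
Qed.
Canonical SL3_group := group SL3_group_set.

Lemma GLof_SL3 M : \det M = 1 -> GLof M \in SL3 F.
Proof. by move=> detM; rewrite inE GLofE detM ?oner_neq0. Qed.

Lemma GLof_notin_center A B :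
  \det A = 1 -> \det B = 1 -> A *m B != B *m A -> GLof A \notin 'Z(SL3 F)%g.
Proof.
move=> detA detB; apply: contra => /centerP[_ cA].
have := congr1 GLval (cA _ (GLof_SL3 detB)).
by rewrite !GL_MxE !GLofE ?detA ?detB ?oner_neq0 // => ->.
Qed.

Lemma scalar_in_center l : l ^+ 3 = 1 -> GLof l%:M \in 'Z(SL3 F)%g.
Proof.
move=> l3; have detl : \det (l%:M : 'M[F]_3) = 1 by rewrite det_scalar l3.
apply/centerP; split; first exact: GLof_SL3.
move=> W _; apply: val_inj; rewrite -[\val _]/(GLval _) -[\val (W * _)%g]/(GLval _).
by rewrite !GL_MxE GLofE ?detl ?oner_neq0 // scalar_mxC.
Qed.

Definition transv (u v : nat) (t : F) :=
  mx3 (fun i j => (i == j)%:R + ((i == u) && (j == v))%:R * t).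

Lemma det_transv u v t :
  (u < 3)%N -> (v < 3)%N -> u != v -> \det (transv u v t) = 1.
Proof.
rewrite det_mx3; case: u => [|[|[|?]]] // _; case: v => [|[|[|?]]] //= _ _; ring.
Qed.

Lemma mul_transv u v t t' : (u < 3)%N -> (v < 3)%N -> u != v ->
  transv u v t *m transv u v t' = transv u v (t + t').
Proof.
rewrite mul_mx3; case: u => [|[|[|?]]] // _; case: v => [|[|[|?]]] //= _ _;
  by apply: eq_mx3 => -[|[|[|i]]] [|[|[|j]]] //= _ _; ring.
Qed.

Lemma transv0 u v : transv u v 0 = 1%:M.
Proof.
apply/matrixP => i j; rewrite !mxE mulr0 addr0.
by case: i j => [[|[|[|i]]] Hi] [[|[|[|j]]] Hj].
Qed.

Lemma GLof_transvX u v t k : (u < 3)%N -> (v < 3)%N -> u != v ->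
  (GLof (transv u v t) ^+ k)%g = GLof (transv u v (t *+ k)).
Proof.
move=> u3 v3 uv; rewrite GLofX ?det_transv ?oner_neq0 //; congr GLof.
elim: k => [|k IHk]; first by rewrite expr0 mulr0n transv0.
by rewrite exprSr IHk -mulmxE mul_transv // mulrSr.
Qed.

Lemma GLof_transvXV u v t k : (u < 3)%N -> (v < 3)%N -> u != v ->
  ((GLof (transv u v t) ^+ k)^-1)%g = GLof (transv u v (- (t *+ k))).
Proof.
move=> u3 v3 uv; rewrite GLof_transvX // (GLofV (B := transv u v (- (t *+ k)))) //.
  by rewrite det_transv ?oner_neq0.
by rewrite mul_transv // subrr transv0.
Qed.

Definition diag3 (a b c : F) := mx3 (fun i j => (i == j)%:R * nth 0 [:: a; b; c] i).

Lemma mul_diag3 a b c a' b' c' :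
  diag3 a b c *m diag3 a' b' c' = diag3 (a * a') (b * b') (c * c').
Proof. by rewrite mul_mx3; apply: eq_mx3 => -[|[|[|i]]] [|[|[|j]]] //= _ _; ring. Qed.

Lemma det_diag3 a b c : \det (diag3 a b c) = a * b * c.
Proof. by rewrite det_mx3 /=; ring. Qed.

Lemma diag3_scalar l : diag3 l l l = l%:M.
Proof.
apply/matrixP => i j; rewrite !mxE.
by case: i j => [[|[|[|i]]] Hi] [[|[|[|j]]] Hj] //=; rewrite ?mul1r ?mul0r.
Qed.

Lemma GLof_diag3X a b c k : a * b * c = 1 ->
  (GLof (diag3 a b c) ^+ k)%g = GLof (diag3 (a ^+ k) (b ^+ k) (c ^+ k)).
Proof.
move=> abc; rewrite GLofX ?det_diag3 ?abc ?oner_neq0 //; congr GLof.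
elim: k => [|k IHk]; first by rewrite !expr0 diag3_scalar.
by rewrite exprSr IHk -mulmxE mul_diag3 -!exprSr.
Qed.

Lemma GLof_diag3XV a b c k : a * b * c = 1 ->
  ((GLof (diag3 a b c) ^+ k)^-1)%g = GLof (diag3 (a ^- k) (b ^- k) (c ^- k)).
Proof.
move=> abc; have : a * b * c != 0 by rewrite abc oner_neq0.
rewrite !mulf_eq0 !negb_or => /andP[/andP[a0 b0] c0].
rewrite GLof_diag3X // (GLofV (B := diag3 (a ^- k) (b ^- k) (c ^- k))) //.
  by rewrite det_diag3 -!exprMn abc expr1n oner_neq0.
by rewrite mul_diag3 !mulfV ?expf_neq0 // diag3_scalar.
Qed.

Lemma GLof_diag3_notin_center a b c : a * b * c = 1 -> (a != b) || (b != c) ->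
  GLof (diag3 a b c) \notin 'Z(SL3 F)%g.
Proof.
move=> abc; have detD : \det (diag3 a b c) = 1 by rewrite det_diag3.
case/orP=> [neq_ab | neq_bc].
- apply: (GLof_notin_center detD (det_transv 1 (u := 0) (v := 1) isT isT isT)).
  rewrite !mul_mx3; apply: (@mx3_neq _ _ 0 1 (a - b)); first by rewrite /=; ring.
  by rewrite subr_eq0.
- apply: (GLof_notin_center detD (det_transv 1 (u := 1) (v := 2) isT isT isT)).
  rewrite !mul_mx3; apply: (@mx3_neq _ _ 1 2 (b - c)); first by rewrite /=; ring.
  by rewrite subr_eq0.
Qed.

Lemma PSL3_p_rank_pchar p : p \in [pchar F] -> (1 < 'r_p(PSL3 F)%g)%N.
Proof.
move=> pchar_p; apply: (quotient_p_rank_ge2 (x := GLof (transv 0 1 1))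
  (y := GLof (transv 0 2 1)) (center_normal SL3_group) (pcharf_prime pchar_p)).
- by rewrite GLof_SL3 ?det_transv.
- by rewrite GLof_SL3 ?det_transv.
- by rewrite GLof_transvX // -mulr_natr mul1r (pcharf0 pchar_p) transv0 GLof1 group1.
- by rewrite GLof_transvX // -mulr_natr mul1r (pcharf0 pchar_p) transv0 GLof1 group1.
- suff /commgP/eqP-> : commute (GLof (transv 0 1 1)) (GLof (transv 0 2 1)) by apply: group1.
  rewrite /commute !GLofM ?det_transv ?oner_neq0 //; congr GLof.
  by rewrite !mul_mx3; apply: eq_mx3 => -[|[|[|i]]] [|[|[|j]]] //= _ _; ring.
- apply: (GLof_notin_center (det_transv 1 (u := 0) (v := 1) isT isT isT)
                            (det_transv 1 (u := 1) (v := 0) isT isT isT)).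
  rewrite !mul_mx3; apply: (@mx3_neq _ _ 0 0 1); first by rewrite /=; ring.
  exact: oner_neq0.
move=> k; rewrite GLof_transvXV // GLofM ?det_transv ?oner_neq0 //.
have detM : \det (transv 0 2 1 *m transv 0 1 (- (1 *+ k))) = 1.
  by rewrite det_mulmx !det_transv ?mulr1.
apply: (GLof_notin_center detM (det_transv 1 (u := 2) (v := 0) isT isT isT)).
rewrite !mul_mx3; apply: (@mx3_neq _ _ 0 0 1); first by rewrite /=; ring.
exact: oner_neq0.
Qed.

Lemma PSL3_p_rank_diag r (z : F) :
  prime r -> z ^+ r = 1 -> z != 1 -> z ^+ 3 != 1 -> (1 < 'r_r(PSL3 F)%g)%N.
Proof.
move=> r_pr zr z1 z3.
have z0 : z != 0.
  by apply: contra_eq_neq zr => ->; rewrite expr0n gtn_eqF ?prime_gt0 // eq_sym oner_neq0.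
have detX : z * z^-1 * 1 = 1 by rewrite mulr1 mulfV.
have detY : z * 1 * z^-1 = 1 by rewrite mulr1 mulfV.
apply: (quotient_p_rank_ge2 (x := GLof (diag3 z z^-1 1)) (y := GLof (diag3 z 1 z^-1))
          (center_normal SL3_group) r_pr); rewrite ?GLof_SL3 ?det_diag3 //.
- by rewrite GLof_diag3X // exprVn zr invr1 expr1n diag3_scalar GLof1 group1.
- by rewrite GLof_diag3X // exprVn zr invr1 expr1n diag3_scalar GLof1 group1.
- suff /commgP/eqP-> : commute (GLof (diag3 z z^-1 1)) (GLof (diag3 z 1 z^-1)).
    exact: group1.
  rewrite /commute !GLofM ?det_diag3 ?detX ?detY ?oner_neq0 //.
  by rewrite !mul_diag3 [z^-1 * 1]mulrC [1 * z^-1]mulrC.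
- by apply: GLof_diag3_notin_center => //; rewrite invr_eq1 z1 orbT.
move=> k; rewrite GLof_diag3XV // exprVn invrK expr1n invr1.
have detXk : z ^- k * z ^+ k * 1 = 1 by rewrite mulr1 mulVf ?expf_neq0.
rewrite GLofM ?det_diag3 ?detY ?detXk ?oner_neq0 // mul_diag3 mul1r mulr1.
apply: GLof_diag3_notin_center; first by field; rewrite z0 expf_neq0.
case: (eqVneq (z ^+ k) z^-1) => [zk|]; last by rewrite orbT.
rewrite zk invrK orbF; apply: contra z3 => /eqP zz.
by rewrite exprS expr2 zz mulfV.
Qed.

(* The permutation matrix of the 3-cycle [e_j |-> e_(j+1)]. *)
Definition cycle3 := mx3 (fun i j => (i == (if j == 2 then 0 else j.+1))%:R).

Lemma det_cycle3 : \det cycle3 = 1.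
Proof. by rewrite det_mx3 /=; ring. Qed.

Lemma cycle3_exp3 : cycle3 ^+ 3 = 1%:M.
Proof.
rewrite !exprS expr0 mulr1 -!mulmxE -(diag3_scalar 1) !mul_mx3.
by apply: eq_mx3 => -[|[|[|i]]] [|[|[|j]]] //= _ _; ring.
Qed.

Lemma PSL3_p_rank3 (w : F) : w ^+ 3 = 1 -> w != 1 -> (1 < 'r_3(PSL3 F)%g)%N.
Proof.
move=> w3 w1; have detX : 1 * w * w ^+ 2 = 1 by rewrite mul1r -exprS.
have w0 : w != 0 by apply: contra_eq_neq w3 => ->; rewrite expr0n eq_sym oner_neq0.
have detX0 : \det (diag3 1 w (w ^+ 2)) != 0 by rewrite det_diag3 detX oner_neq0.
have detC0 : \det cycle3 != 0 by rewrite det_cycle3 oner_neq0.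
apply: (quotient_p_rank_ge2 (x := GLof (diag3 1 w (w ^+ 2))) (y := GLof cycle3)
          (center_normal SL3_group)); rewrite ?GLof_SL3 ?det_diag3 ?det_cycle3 //.
- by rewrite GLof_diag3X // expr1n -exprM mulnC exprM w3 expr1n diag3_scalar GLof1 group1.
- by rewrite GLofX // cycle3_exp3 GLof1 group1.
- have -> : commg (GLof (diag3 1 w (w ^+ 2))) (GLof cycle3) = GLof (diag3 w w w).
    apply: (mulgI (GLof cycle3 * GLof (diag3 1 w (w ^+ 2))%R)%g); rewrite -commgC.
    rewrite !GLofM ?det_diag3 ?det_mulmx ?mulf_neq0 ?detX ?w3 ?oner_neq0 //; congr GLof.
    by rewrite !mul_mx3; apply: eq_mx3 => -[|[|[|i]]] [|[|[|j]]] //= _ _; ring: w3.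
  by rewrite diag3_scalar scalar_in_center.
- by apply: GLof_diag3_notin_center => //; rewrite eq_sym w1.
move=> k; rewrite GLof_diag3XV // expr1n invr1.
have detXk : 1 * w ^- k * (w ^+ 2) ^- k = 1.
  by rewrite mul1r -invfM -exprMn -exprS w3 expr1n invr1.
rewrite GLofM ?det_diag3 ?detXk ?oner_neq0 //.
have detM : \det (cycle3 *m diag3 1 (w ^- k) ((w ^+ 2) ^- k)) = 1.
  by rewrite det_mulmx det_cycle3 det_diag3 detXk mulr1.
apply: (GLof_notin_center detM (B := diag3 1 w (w ^+ 2))); first by rewrite det_diag3.
rewrite !mul_mx3; apply: (@mx3_neq _ _ 1 0 (1 - w)); first by rewrite /=; ring.
by rewrite subr_eq0 eq_sym.
Qed.

Lemma PSL3_p_rank_unit r : prime r -> (r %| #|F|.-1)%N -> (1 < 'r_r(PSL3 F)%g)%N.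
Proof.
move=> r_pr; rewrite -card_finField_unit => /(Cauchy r_pr)[u _ ou].
have zk k : (FinRing.uval u ^+ k = 1) <-> (r %| k)%N.
  rewrite -ou order_dvdn -FinRing.val_unitX -FinRing.val_unit1.
  by split=> [/val_inj-> | /eqP->].
have z1 : FinRing.uval u != 1.
  by apply/eqP => /(zk 1%N).1; rewrite dvdn1 => /eqP r1; rewrite r1 in r_pr.
have [r3|r_neq3] := eqVneq r 3.
  by rewrite r3 in zk *; exact: PSL3_p_rank3 ((zk 3%N).2 (dvdnn 3)) z1.
have z3 : FinRing.uval u ^+ 3 != 1.
  by apply/eqP => /zk; rewrite dvdn_prime2 // (negPf r_neq3).
exact: PSL3_p_rank_diag r_pr ((zk r).2 (dvdnn r)) z1 z3.
Qed.

End SL3Matrices.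

Lemma pchar_coprime_finField_unit (F : finFieldType) p :
  p \in [pchar F]%R -> coprime p #|F|.-1.
Proof.
move=> pchar_p; have p_pr := pcharf_prime pchar_p.
have [k qE] : {k | #|F| = p ^ k}.
  by rewrite -cardsT; apply: p_natP (abelem_pgroup (fin_ring_pchar_abelem pchar_p)).
have k_gt0 : 0 < k.
  by rewrite lt0n; apply: contraTneq (finNzRing_gt1 F) => k0; rewrite qE k0.
by rewrite coprime_sym -(coprime_pexpr _ _ k_gt0) -qE coprimePn // ltnW ?finNzRing_gt1.
Qed.

Theorem lemma5p6 (F : finFieldType) (gT : finGroupType) (S T : {group gT}) (g h : gT)
  (a b s : nat) :
  2 < #|F| ->
  two_m_n_group S g h ->
  almost_simple_with_socle S T ->
  (T \isog PSL3 F)%g ->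
  prime s -> odd s -> 0 < a -> 0 < b ->
  euler_char S g h = (- ((2 ^ a * s ^ b)%N)%:R)%R ->
  exists c r : nat, [/\ 0 < c, prime r & #|F| - 1 = r ^ c].
Proof.
move=> q_gt2 [Sg Sh _ _] [nsTS _ _ _] isoT s_pr _ _ _ chiE.
have rank_2s p : prime p -> 1 < 'r_p(PSL3 F)%g -> (p == 2) || (p == s).
  move=> p_pr; apply: contraLR; rewrite negb_or -leqNgt => /andP[p2 ps].
  rewrite -(isog_p_rank isoT); apply: leq_trans (p_rankS _ (normal_sub nsTS)) _.
  have C_gt0 : 0 < 2 ^ a * s ^ b by rewrite muln_gt0 !expn_gt0 (prime_gt0 s_pr).
  have cop q : prime q -> p != q -> coprime p q.
    by move=> q_pr; rewrite prime_coprime // dvdn_prime2.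
  apply: (p_rank_le1_euler_char Sg Sh C_gt0 chiE p_pr).
  by rewrite !coprimeMr !coprimeXr ?cop.
have [p0 p0_pr pchar_p0] := finPcharP F.
rewrite subn1; apply: (prime_power_of_pdivisors p0_pr s_pr).
- by rewrite -subn1; lia.
- exact: pchar_coprime_finField_unit.
- exact: rank_2s p0_pr (PSL3_p_rank_pchar pchar_p0).
by move=> r r_pr r_q1; apply: rank_2s r_pr (PSL3_p_rank_unit r_pr r_q1).
Qed.
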